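(* Let $\mathcal C$ be an operadic category and $\pi:d\to e$ a fibrewise trivial morphism of $\mathcal C$. Then a morphism $\varphi:c\to d$ is fibrewise trivial if and only if $\pi\varphi$ is fibrewise trivial.
   Context: Operadic categories: $\mathcal S$ is a skeleton of finite sets, with fixed equivalences $R_I:\mathcal S/I\to\mathcal S^I$ sending $f:J\to I$ to its fibres. An operadic category is a category $\mathcal C$ with a functor $|\cdot|:\mathcal C\to\mathcal S$ and functors $R_c:\mathcal C/c\to\mathcal C^{|c|}$ with $|\cdot|^{|c|}\circ R_c=R_{|c|}\circ(|\cdot|/c)$; the fibre $\psi^{-1}i$ of $\psi:c\to d$ at $i\in|d|$ is the $i$-th component of $R_d(\psi)$; for $\varphi:b\to c,\psi:c\to d$, $\varphi^\psi=R_d(\varphi:\psi\varphi\to\psi)$ with components $\varphi^\psi_j:(\psi\varphi)^{-1}j\to\psi^{-1}j$; $u$ is trivial if $|u|=1$ and $R_u=\mathrm{dom}$. Axioms: fibres of identities are trivial; double slice condition: for $\psi:c\to d$, $R_c\circ(\mathrm{dom}/\psi)=(\cong)\circ(\prod_jR_{\psi^{-1}j})\circ(R_d/\psi)$ as functors $(\mathcal C/d)/\psi\to\mathcal C^{|c|}$, via $\mathcal C^{|d|}/R_d\psi\cong\prod_j\mathcal C/\psi^{-1}j$ and $|c|\cong\sum_j|\psi|^{-1}j$ (on objects: $(\varphi^\psi_{|\psi|(i)})^{-1}i=\varphi^{-1}i$). A morphism of $\mathcal C$ is fibrewise trivial if all its fibres are trivial objects. *)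

From mathcomp Require Import all_boot.

Set Implicit Arguments.
Unset Strict Implicit.
Unset Printing Implicit Defensive.

(* Categories (strict; equality of morphisms is Leibniz equality).      *)
Record Cat := {
  ob : Type;
  hom : ob -> ob -> Type;
  idm : forall a, hom a a;
  cmp : forall a b c, hom b c -> hom a b -> hom a c;
  comp1m : forall a b (f : hom a b), cmp (idm b) f = f;
  compm1 : forall a b (f : hom a b), cmp f (idm a) = f;
  compA : forall a b c d (h : hom c d) (g : hom b c) (f : hom a b),
      cmp h (cmp g f) = cmp (cmp h g) f
}.
Arguments idm {_} a.
Arguments cmp {_ a b c} g f.
Arguments hom {_} a b.

Definition castHom (C : Cat) (x x' y y' : ob C) (e1 : x = x') (e2 : y = y')
  (h : hom x y) : hom x' y' :=
  eq_rect y (fun z => hom x' z) (eq_rect x (fun z => hom z y) h x' e1) y' e2.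

(* The skeleton S of finite sets: objects n : nat (standing for 'I_n),  *)
(* morphisms 'I_m -> 'I_n.  The fixed equivalence R_I sends f : J -> I  *)
(* to its fibres f^{-1}(i), identified with 'I_#|f^{-1}(i)| via the     *)
(* order-preserving enumeration (enum of a subset of 'I_m is increasing).*)
Definition sfib (m n : nat) (f : 'I_m -> 'I_n) (i : 'I_n) : {set 'I_m} :=
  [set j | f j == i].

Definition sfib_elt (m n : nat) (f : 'I_m -> 'I_n) (i : 'I_n) (k : nat) : nat :=
  nth 0 [seq val x | x <- enum (sfib f i)] k.

Definition sfib_rank (m n : nat) (f : 'I_m -> 'I_n) (i : 'I_n) (x : 'I_m) : nat :=
  index x (enum (sfib f i)).

(* Operadic category data: the cardinality functor |.| : C -> S and the *)
(* fibre functors R_c : C/c -> C^{|c|}, compatible with R_{|c|}.        *)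
(* fib f i  = f^{-1} i  (i-th component of R_c(f) for f : a -> c);       *)
(* fibm f g h p i = i-th component of R_c(h : f -> g), p : g h = f.      *)
Unset Implicit Arguments.
Record OpCatData (C : Cat) := {
  card : ob C -> nat;
  cardm : forall a b : ob C, hom a b -> 'I_(card a) -> 'I_(card b);
  cardm_id : forall a x, cardm a a (idm a) x = x;
  cardm_comp : forall a b c (g : hom b c) (f : hom a b) x,
      cardm a c (cmp g f) x = cardm b c g (cardm a b f x);
  fib : forall c a : ob C, hom a c -> 'I_(card c) -> ob C;
  fibm : forall c a b (f : hom a c) (g : hom b c) (h : hom a b),
      cmp g h = f -> forall i, hom (fib c a f i) (fib c b g i);
  fibm_id : forall c a (f : hom a c) (p : cmp f (idm a) = f) i,
      fibm c a a f f (idm a) p i = idm (fib c a f i);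
  fibm_comp : forall c a b b' (f : hom a c) (g : hom b c) (k : hom b' c)
      (h : hom a b) (h' : hom b b') (p : cmp g h = f) (p' : cmp k h' = g)
      (p'' : cmp k (cmp h' h) = f) i,
      fibm c a b' f k (cmp h' h) p'' i
      = cmp (fibm c b b' g k h' p' i) (fibm c a b f g h p i);
  (* |.|^{|c|} o R_c = R_{|c|} o (|.|/c), on objects *)
  card_fib : forall c a (f : hom a c) i,
      card (fib c a f i) = #|sfib (cardm a c f) i|;
  (* ... and on morphisms (through the fixed order-preserving identifications) *)
  cardm_fibm : forall c a b (f : hom a c) (g : hom b c) (h : hom a b)
      (p : cmp g h = f) i (k : 'I_(card (fib c a f i))),
      omap (fun y : 'I_(card a) => val (cardm a b h y))
           (insub (sfib_elt (cardm a c f) i k))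
      = Some (sfib_elt (cardm b c g) i (cardm _ _ (fibm c a b f g h p i) k))
}.
Set Implicit Arguments.
Arguments card {C} o x.
Arguments cardm {C} o {a b} f x.
Arguments fib {C} o {c a} f i.
Arguments fibm {C} o {c a b} f g h p i.

(* u is trivial: |u| = 1 and R_u = dom : C/u -> C^1 (strict equality of functors) *)
Definition trivial (C : Cat) (O : OpCatData C) (u : ob C) : Prop :=
  card O u = 1 /\
  exists E : forall (a : ob C) (f : hom a u) (i : 'I_(card O u)), fib O f i = a,
    forall (a b : ob C) (f : hom a u) (g : hom b u) (h : hom a b)
           (p : cmp g h = f) (i : 'I_(card O u)),
      castHom (E a f i) (E b g i) (fibm O f g h p i) = h.

(* phi^psi_j : (psi phi)^{-1} j -> psi^{-1} j, i.e. R_d(phi : psi phi -> psi) *)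
Definition upper (C : Cat) (O : OpCatData C) (c d a : ob C) (psi : hom c d)
  (phi : hom a c) (j : 'I_(card O d)) : hom (fib O (cmp psi phi) j) (fib O psi j) :=
  fibm O (cmp psi phi) psi phi erefl j.

Arguments upper {C} O {c d a} psi phi j.

Record OpCat (C : Cat) := {
  opdata :> OpCatData C;
  fib_id_trivial : forall (c : ob C) (i : 'I_(card opdata c)),
      trivial opdata (fib opdata (idm c) i);
  (* double slice condition, on objects:
     (phi^psi_{|psi|(i)})^{-1} i = phi^{-1} i, where i in |c| is identified with
     its position k in the fibre |psi|^{-1}(|psi| i) ~ |psi^{-1}(|psi| i)| *)
  dslice_ob : forall (c d : ob C) (psi : hom c d) (a : ob C) (phi : hom a c)
      (i : 'I_(card opdata c)) (j : 'I_(card opdata d)) (hj : cardm opdata psi i = j)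
      (k : 'I_(card opdata (fib opdata psi j))),
      val k = sfib_rank (cardm opdata psi) j i ->
      fib opdata phi i = fib opdata (upper opdata psi phi j) k;
  (* double slice condition, on morphisms of (C/d)/psi *)
  dslice_hom : forall (c d : ob C) (psi : hom c d) (a a' : ob C)
      (phi : hom a c) (phi' : hom a' c) (h : hom a a') (p : cmp phi' h = phi)
      (i : 'I_(card opdata c)) (j : 'I_(card opdata d)) (hj : cardm opdata psi i = j)
      (k : 'I_(card opdata (fib opdata psi j)))
      (hk : val k = sfib_rank (cardm opdata psi) j i)
      (q : cmp (cmp psi phi') h = cmp psi phi)
      (r : cmp (upper opdata psi phi' j) (fibm opdata (cmp psi phi) (cmp psi phi') h q j)
           = upper opdata psi phi j)
      (e1 : fib opdata phi i = fib opdata (upper opdata psi phi j) k)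
      (e2 : fib opdata phi' i = fib opdata (upper opdata psi phi' j) k),
      castHom e1 e2 (fibm opdata phi phi' h p i)
      = fibm opdata (upper opdata psi phi j) (upper opdata psi phi' j)
             (fibm opdata (cmp psi phi) (cmp psi phi') h q j) r k
}.

Definition fibrewise_trivial (C : Cat) (O : OpCatData C) (a c : ob C) (f : hom a c) : Prop :=
  forall i : 'I_(card O c), trivial O (fib O f i).

From Pilot Require Import Defs.
From mathcomp Require Import all_boot.

(* Since π^{-1}j is trivial for every j, the fibre functor of π^{-1}j is the
   domain functor.  The double slice condition identifies φ^{-1}i with a fibre
   of φ^π_j : (πφ)^{-1}j -> π^{-1}j, where j = |π|(i), so φ^{-1}i = (πφ)^{-1}j.
   Trivial objects have cardinality 1, so |π| is surjective and the fibres of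
   πφ are exactly the fibres of φ, reindexed along |π|. *)

Set Implicit Arguments.
Unset Strict Implicit.
Unset Printing Implicit Defensive.

Section FibreData.

Variables (C : Cat) (O : OpCatData C).

Lemma trivial_fib (u a : ob C) (f : hom a u) (i : 'I_(Defs.card O u)) :
  trivial O u -> fib O f i = a.
Proof. by case=> _ [E _]; exact: E. Qed.

Lemma sfib_rank_lt (c d : ob C) (psi : hom c d) (i : 'I_(Defs.card O c)) :
  sfib_rank (cardm O psi) (cardm O psi i) i
    < Defs.card O (fib O psi (cardm O psi i)).
Proof. by rewrite card_fib /sfib_rank cardE index_mem mem_enum inE. Qed.

Definition fib_pos (c d : ob C) (psi : hom c d) (i : 'I_(Defs.card O c)) :
  'I_(Defs.card O (fib O psi (cardm O psi i))) := Ordinal (sfib_rank_lt psi i).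

Lemma fibrewise_trivial_cardm_surj (d e : ob C) (pi : hom d e) :
  fibrewise_trivial O pi -> forall j, exists i, cardm O pi i = j.
Proof.
move=> pi_triv j; case: (pi_triv j) => + _; rewrite card_fib => card_sfib.
have : 0 < #|sfib (cardm O pi) j| by rewrite card_sfib.
by case/card_gt0P=> i; rewrite inE => /eqP; exists i.
Qed.

End FibreData.

Section DoubleSlice.

Variables (C : Cat) (OC : OpCat C).

Lemma fib_upper (a c d : ob C) (psi : hom c d) (phi : hom a c)
    (i : 'I_(Defs.card OC c)) :
  fib OC phi i = fib OC (upper OC psi phi (cardm OC psi i)) (fib_pos psi i).
Proof. exact: dslice_ob. Qed.

Lemma fib_comp_trivial_fib (a c d : ob C) (pi : hom c d) (phi : hom a c)
    (i : 'I_(Defs.card OC c)) :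
  trivial OC (fib OC pi (cardm OC pi i)) ->
  fib OC phi i = fib OC (cmp pi phi) (cardm OC pi i).
Proof. by move=> triv; rewrite (fib_upper pi) trivial_fib. Qed.

End DoubleSlice.

Theorem lemma8p2 (C : Cat) (OC : OpCat C) (c d e : ob C)
  (pi : hom d e) (phi : hom c d) :
  fibrewise_trivial OC pi ->
  (fibrewise_trivial OC phi <-> fibrewise_trivial OC (cmp pi phi)).
Proof.
move=> pi_triv; split=> triv.
- move=> j; have [i <-] := fibrewise_trivial_cardm_surj pi_triv j.
  by rewrite -(fib_comp_trivial_fib phi (pi_triv _)).
- by move=> i; rewrite (fib_comp_trivial_fib phi (pi_triv _)).
Qed.
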